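(* In the three-dimensional Poisson regression model with first-order interactions, $\mathbf{f}(\mathbf{x})^\top\boldsymbol{\beta}=\beta_0+\beta_1x_1+\beta_2x_2+\beta_3x_3+\beta_{12}x_1x_2+\beta_{13}x_1x_3+\beta_{23}x_2x_3$, let $\beta_0=0$, $\beta_1=\beta_2=\beta_3=-1$ and $\beta_{12}=\beta_{13}=\beta_{23}=0$. Then the design which assigns equal weights $1/7$ to the seven settings $(0,0,0)$, $(2,0,0)$, $(0,2,0)$, $(0,0,2)$, $(2,2,0)$, $(2,0,2)$, $(0,2,2)$ is locally $D$-optimal at $\boldsymbol{\beta}$ on $\mathcal{X}=[0,\infty)^3$.
   Context: An observation at $\mathbf{x}=(x_1,x_2,x_3)$ is Poisson distributed with mean $\lambda(\mathbf{x})=\exp(\mathbf{f}(\mathbf{x})^\top\boldsymbol{\beta})$ with $\mathbf{f}(\mathbf{x})=(1,x_1,x_2,x_3,x_1x_2,x_1x_3,x_2x_3)^\top$. A design $\xi$ is a finite collection of distinct settings $\mathbf{x}_i\in\mathcal{X}$ with weights $w_i\ge0$ summing to $1$; its information matrix is $\mathbf{M}_{\boldsymbol{\beta}}(\xi)=\sum_i w_i\lambda(\mathbf{x}_i)\mathbf{f}(\mathbf{x}_i)\mathbf{f}(\mathbf{x}_i)^\top$. A design is locally $D$-optimal at $\boldsymbol{\beta}$ on $\mathcal{X}$ if it maximizes $\det\mathbf{M}_{\boldsymbol{\beta}}(\xi)$ over all designs on $\mathcal{X}$. *)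

From HB Require Import structures.
From mathcomp Require Import all_boot all_order all_algebra.
From mathcomp Require Import reals.
From mathcomp.analysis Require Import sequences exp.
Set Implicit Arguments. Unset Strict Implicit. Unset Printing Implicit Defensive.
Import Order.TTheory GRing.Theory Num.Theory.
Local Open Scope ring_scope.

Definition pt (R : Type) := (R * R * R)%type.
Definition x1 {R : Type} (p : pt R) : R := p.1.1.
Definition x2 {R : Type} (p : pt R) : R := p.1.2.
Definition x3 {R : Type} (p : pt R) : R := p.2.

Definition fvec (R : realType) (p : pt R) : 'cV[R]_7 :=
  \col_(i < 7) nth 0 [:: 1; x1 p; x2 p; x3 p; x1 p * x2 p; x1 p * x3 p; x2 p * x3 p] i.

Definition lambda (R : realType) (beta : 'cV[R]_7) (p : pt R) : R :=
  expR (((fvec p)^T *m beta) 0 0).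

Definition is_design (R : realType) (X : pt R -> Prop) (n : nat)
    (x : 'I_n -> pt R) (w : 'I_n -> R) : Prop :=
  injective x /\ (forall i, X (x i)) /\ (forall i, 0 <= w i) /\ \sum_(i < n) w i = 1.

Definition infomat (R : realType) (beta : 'cV[R]_7) (n : nat)
    (x : 'I_n -> pt R) (w : 'I_n -> R) : 'M[R]_7 :=
  \sum_(i < n) (w i * lambda beta (x i)) *: (fvec (x i) *m (fvec (x i))^T).

Definition locally_D_optimal (R : realType) (beta : 'cV[R]_7) (X : pt R -> Prop)
    (n : nat) (x : 'I_n -> pt R) (w : 'I_n -> R) : Prop :=
  is_design X x w /\
  forall (m : nat) (y : 'I_m -> pt R) (v : 'I_m -> R),
    is_design X y v -> \det (infomat beta y v) <= \det (infomat beta x w).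

Definition nonneg_orthant (R : realType) (p : pt R) : Prop :=
  0 <= x1 p /\ 0 <= x2 p /\ 0 <= x3 p.

Definition beta_cor1 (R : realType) : 'cV[R]_7 :=
  \col_(i < 7) nth 0 [:: 0; -1; -1; -1; 0; 0; 0] i.

Definition pts_cor1 (R : realType) : 'I_7 -> pt R := fun i =>
  nth (0, 0, 0) [:: (0, 0, 0); (2, 0, 0); (0, 2, 0); (0, 0, 2);
                    (2, 2, 0); (2, 0, 2); (0, 2, 2)] i.

Definition wts_cor1 (R : realType) : 'I_7 -> R := fun _ => 1 / 7%:R.

(* The information matrix of every design factors as T G T^T, where the columns
   of T are sqrt(lambda(x_j)) f(x_j) at the seven support points x_j and G is the
   Gram matrix sum_k w_k h(y_k) h(y_k)^T of h(y) = sqrt(lambda(y)) T^-1 f(y).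
   For the candidate design G = I/7.  In general Hadamard's inequality and AM-GM
   give det G <= (tr G / 7)^7 <= 7^-7 as soon as |h(y)|^2 <= 1 on the orthant.
   With t = y/2 this condition reads sens3(t) <= e^(2(t1+t2+t3)) for an explicit
   polynomial sens3; it follows from sens3(t) <= m(t1) m(t2) m(t3) for a cubic m
   with m(t) <= e^(2t), using 7.38 <= e^2 <= 7.4. *)

From mathcomp Require Import all_boot all_order all_algebra.
From mathcomp Require Import reals.
From mathcomp.analysis Require Import sequences exp.
From mathcomp Require Import classical_sets topology normedtype derive.
From mathcomp Require Import ring lra.
Set Implicit Arguments. Unset Strict Implicit. Unset Printing Implicit Defensive.
Import Order.TTheory GRing.Theory Num.Theory.
Import numFieldNormedType.Exports.
Local Open Scope classical_set_scope.
Local Open Scope ring_scope.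

Section GramDeterminant.
Variable R : realFieldType.

Definition gram n m (v : 'I_m -> R) (h : 'I_m -> 'cV[R]_n) : 'M[R]_n :=
  \sum_(k < m) v k *: (h k *m (h k)^T).

Lemma gramE n m v h (i j : 'I_n) :
  @gram n m v h i j = \sum_(k < m) v k * (h k i 0 * h k j 0).
Proof.
rewrite /gram summxE; apply: eq_bigr => k _.
by rewrite !mxE big_ord1 !mxE.
Qed.

Lemma gram_sym n m v h (i j : 'I_n) : @gram n m v h i j = gram v h j i.
Proof. by rewrite !gramE; apply: eq_bigr => k _; rewrite (mulrC (h k i 0)). Qed.

Section NonnegWeights.
Variables (n m : nat) (v : 'I_m -> R).
Hypothesis v_ge0 : forall k, 0 <= v k.

Lemma gram_diag_ge0 (h : 'I_m -> 'cV[R]_n) i : 0 <= gram v h i i.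
Proof.
rewrite gramE; apply: sumr_ge0 => k _.
by rewrite mulr_ge0 // -expr2 sqr_ge0.
Qed.

Lemma gram_row_eq0 (h : 'I_m -> 'cV[R]_n) i j : gram v h i i = 0 -> gram v h i j = 0.
Proof.
rewrite !gramE => /eqP; rewrite psumr_eq0 => [/allP vh0|k _]; last first.
  by rewrite mulr_ge0 // -expr2 sqr_ge0.
rewrite big1 // => k _; move: (vh0 k (mem_index_enum _)).
rewrite mulf_eq0 -expr2 sqrf_eq0 => /orP[] /eqP ->; first by rewrite mul0r.
by rewrite mul0r mulr0.
Qed.

End NonnegWeights.

Lemma det_schur n (G : 'M[R]_(1 + n)) (a := G 0 0) : a != 0 ->
  \det G = a * \det (drsubmx G - (a^-1 *: dlsubmx G) *m ursubmx G).
Proof.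
move=> a0.
set b := dlsubmx G; set S := drsubmx G - _.
have ul : ulsubmx G = a%:M.
  apply/matrixP => i j; rewrite !ord1 !mxE /=.
  by congr (G _ _); apply/val_inj.
have -> : G = block_mx 1%:M 0 (a^-1 *: b) 1%:M *m block_mx a%:M (ursubmx G) 0 S.
  rewrite mulmx_block !mul1mx !mul0mx !addr0 ?add0r mul_mx_scalar scalerA mulfV //.
  by rewrite scale1r /S addrC subrK -ul submxK.
by rewrite det_mulmx det_lblock det_ublock !det1 det_scalar1 !mul1r.
Qed.

Lemma gram_schur n m v (h : 'I_m -> 'cV[R]_(1 + n)) (G := gram v h) (a := G 0 0) :
  a != 0 -> drsubmx G - (a^-1 *: dlsubmx G) *m ursubmx G =
  gram v (fun k => \col_i (h k (lift 0 i) 0 - h k 0 0 / a * G (lift 0 i) 0)).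
Proof.
move=> a0; apply/matrixP => i j; rewrite [in RHS]gramE.
under [in RHS]eq_bigr => k _ do rewrite !mxE.
rewrite !mxE big_ord1 !mxE !rshift1 !lshift0 (gram_sym _ _ 0 (lift 0 j)).
set bi := G (lift 0 i) 0; set bj := G (lift 0 j) 0.
have termE k : v k * ((h k (lift 0 i) 0 - h k 0 0 / a * bi)
                      * (h k (lift 0 j) 0 - h k 0 0 / a * bj)) =
   v k * (h k (lift 0 i) 0 * h k (lift 0 j) 0)
   - bj / a * (v k * (h k (lift 0 i) 0 * h k 0 0))
   - bi / a * (v k * (h k (lift 0 j) 0 * h k 0 0))
   + bi * bj / a ^+ 2 * (v k * (h k 0 0 * h k 0 0)).
  by field.
rewrite (eq_bigr _ (fun k _ => termE k)) !big_split /= !sumrN -!mulr_sumr.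
by rewrite -!gramE -/G -/a -/bi -/bj; field.
Qed.

Lemma det_gram_le_prod_diag n m (v : 'I_m -> R) (h : 'I_m -> 'cV[R]_n) :
  (forall k, 0 <= v k) -> \det (gram v h) <= \prod_(i < n) gram v h i i.
Proof.
elim: n m v h => [|n IH] m v h v_ge0; first by rewrite det_mx00 big_ord0.
set G := gram v h.
have [a0|a_neq0] := eqVneq (G 0 0) 0.
  rewrite (expand_det_row _ 0) big1 => [|j _]; last by rewrite gram_row_eq0 ?mul0r.
  by apply: prodr_ge0 => i _; apply: gram_diag_ge0.
have a_gt0 : 0 < G 0 0 by rewrite lt_def a_neq0 gram_diag_ge0.
rewrite det_schur // gram_schur // big_ord_recl.
apply: ler_wpM2l; first exact: ltW.
apply: le_trans (IH _ _ _ v_ge0) _; apply: ler_prod => i _.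
apply/andP; split; first exact: gram_diag_ge0.
rewrite -gram_schur // !mxE big_ord1 !mxE rshift1 lshift0.
rewrite (gram_sym _ _ 0 (lift 0 i)) lerBlDr lerDl -mulrA.
by rewrite mulr_ge0 ?invr_ge0 ?(ltW a_gt0) // -expr2 sqr_ge0.
Qed.

Lemma det_gram_le n m (v : 'I_m -> R) (h : 'I_m -> 'cV[R]_n.+1) :
  (forall k, 0 <= v k) -> \sum_(k < m) v k = 1 ->
  (forall k, \sum_(i < n.+1) h k i 0 ^+ 2 <= 1) ->
  \det (gram v h) <= (n.+1)%:R^-1 ^+ n.+1.
Proof.
move=> v_ge0 v_sum1 h_le1.
have diag_ge0 i : 0 <= gram v h i i by apply: gram_diag_ge0.
have trace_le1 : \sum_(i < n.+1) gram v h i i <= 1.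
  under eq_bigr do rewrite gramE.
  rewrite exchange_big /= -v_sum1; apply: ler_sum => k _.
  rewrite -mulr_sumr ler_piMr //; under eq_bigr do rewrite -expr2.
  exact: h_le1.
apply: le_trans (det_gram_le_prod_diag h v_ge0) _.
have AGM := (@leif_AGM _ _ predT _ (fun i _ => diag_ge0 i)).1.
rewrite /= cardT size_enum_ord in AGM; apply: le_trans AGM _.
rewrite lerXn2r ?nnegrE ?divr_ge0 ?sumr_ge0 ?invr_ge0 //.
by rewrite -[leRHS]mul1r ler_pM2r ?invr_gt0 ?ltr0n.
Qed.

End GramDeterminant.

Section ExpBounds.
Variable R : realType.
Implicit Types (f df : R -> R) (x y : R).

Lemma MVT_from0 f df y : (forall x, is_derive x 1 f (df x)) -> y != 0 ->
  exists2 c, 0 < c * y & f y - f 0 = df c * y.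
Proof.
move=> fd y0.
have fc a b : {within `[a, b], continuous f}.
  apply: continuous_subspaceT => x; apply: differentiable_continuous.
  by apply/derivable1_diffP; exact: (@ex_derive _ _ _ _ _ _ _ (fd x)).
have [yneg|ypos|y0E] := ltgtP y 0; last by rewrite y0E eqxx in y0.
- have [c] := MVT yneg (fun x _ => fd x) (fc y 0).
  rewrite in_itv /= => /andP[_ c0] fE; exists c; first by rewrite nmulr_rgt0.
  by apply: oppr_inj; rewrite opprB fE sub0r mulrN.
- have [c] := MVT ypos (fun x _ => fd x) (fc 0 y).
  rewrite in_itv /= => /andP[c0 _] fE; exists c; first by rewrite mulr_gt0.
  by rewrite fE subr0.
Qed.

Lemma ge0_derive_sign_diff f df y : (forall x, is_derive x 1 f (df x)) ->
  (forall x, 0 <= df x) -> 0 <= y * (f y - f 0).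
Proof.
move=> fd df0; have [->|y0] := eqVneq y 0; first by rewrite mul0r.
have [c _ ->] := MVT_from0 fd y0.
by rewrite mulrCA -expr2 mulr_ge0 ?sqr_ge0.
Qed.

Lemma sign_derive_min0 f df y : (forall x, is_derive x 1 f (df x)) ->
  (forall x, 0 <= x * df x) -> f 0 <= f y.
Proof.
move=> fd dfs; rewrite -subr_ge0; have [->|y0] := eqVneq y 0; first by rewrite subrr.
have [c cy ->] := MVT_from0 fd y0; have := dfs c; nra.
Qed.

Lemma expR_ge_cubic y : 1 + y + y ^+ 2 / 2 + y ^+ 3 / 6 <= expR y.
Proof.
pose r1 x := expR x - (1 + x).
pose r2 x := expR x - (1 + x + x ^+ 2 / 2).
pose r3 x := expR x - (1 + x + x ^+ 2 / 2 + x ^+ 3 / 6).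
have r2' x : is_derive x 1 r2 (r1 x).
  by apply: is_derive_eq; rewrite /r1 /GRing.scale /=; field.
have r3' x : is_derive x 1 r3 (r2 x).
  by apply: is_derive_eq; rewrite /r2 /GRing.scale /=; field.
have r1_ge0 x : 0 <= r1 x by rewrite subr_ge0 expR_ge1Dx.
have r2_sign x : 0 <= x * r2 x.
  have := ge0_derive_sign_diff x r2' r1_ge0.
  by rewrite /r2 expR0 expr0n /= !(addr0, mul0r) subrr subr0.
have := sign_derive_min0 y r3' r2_sign.
by rewrite /r3 expR0 !expr0n /= !(addr0, mul0r) subrr subr_ge0.
Qed.

Lemma expR2_bounds : 738 / 100 <= expR (2 : R) <= 74 / 10.
Proof.
apply/andP; split.
  have q_ge : 493 / 384 <= expR (1 / 4 : R) by apply: le_trans (expR_ge_cubic _); lra.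
  have -> : expR (2 : R) = expR (1 / 4) ^+ 8 by rewrite -expRM_natl; congr expR; lra.
  apply: le_trans (_ : (493 / 384) ^+ 8 <= _); first lra.
  by rewrite lerXn2r ?nnegrE ?expR_ge0 //; lra.
have q_ge : 2711 / 3072 <= expR (- (1 / 8) : R).
  by apply: le_trans (expR_ge_cubic _); lra.
have -> : expR (2 : R) = (expR (- (1 / 8)) ^+ 16)^-1.
  by rewrite -expRM_natl -expRN; congr expR; lra.
apply: le_trans (_ : ((2711 / 3072) ^+ 16)^-1 <= _); last lra.
rewrite lef_pV2 ?posrE ?exprn_gt0 ?expR_gt0 //; last lra.
by rewrite lerXn2r ?nnegrE ?expR_ge0 //; lra.
Qed.

End ExpBounds.

Section SensitivityBound.
Variable R : realFieldType.
Variable E : R.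

(* For E = e^2 and t = y / 2, sens3 t1 t2 t3 = e^(y1+y2+y3) |h(y)|^2 and sens1 is
   its one-factor analogue; sens3 is not the product of the sens1 because the
   model lacks the three-factor interaction (sens3E). *)
Definition sens1 (t : R) : R := (1 - t) ^+ 2 + E * t ^+ 2.
Definition slack (t : R) : R := 7 / 2 * t * (1 - t) ^+ 2.
Definition majorant (t : R) : R := sens1 t + slack t.
Definition defect (t : R) : R := (1 + E) * t ^+ 2 - t.

Definition sens3 (t1 t2 t3 : R) : R :=
  (1 - t1 - t2 - t3 + t1 * t2 + t1 * t3 + t2 * t3) ^+ 2
  + E * ((t1 - t1 * t2 - t1 * t3) ^+ 2 + (t2 - t1 * t2 - t2 * t3) ^+ 2
         + (t3 - t1 * t3 - t2 * t3) ^+ 2)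
  + E ^+ 2 * ((t1 * t2) ^+ 2 + (t1 * t3) ^+ 2 + (t2 * t3) ^+ 2).

Definition excess (t1 t2 t3 : R) : R :=
  slack t1 * sens1 t2 * sens1 t3 + sens1 t1 * slack t2 * sens1 t3
  + sens1 t1 * sens1 t2 * slack t3 + 2 * (defect t1 * defect t2 * defect t3)
  - (1 + E) ^+ 3 * (t1 * t2 * t3) ^+ 2.

Lemma sens3E t1 t2 t3 : sens3 t1 t2 t3 =
  sens1 t1 * sens1 t2 * sens1 t3 - 2 * (defect t1 * defect t2 * defect t3)
  + (1 + E) ^+ 3 * (t1 * t2 * t3) ^+ 2.
Proof. by rewrite /sens3 /sens1 /defect; ring. Qed.

Lemma excess_perm12 t1 t2 t3 : excess t1 t2 t3 = excess t2 t1 t3.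
Proof. by rewrite /excess; ring. Qed.

Lemma excess_perm13 t1 t2 t3 : excess t1 t2 t3 = excess t3 t2 t1.
Proof. by rewrite /excess; ring. Qed.

Lemma excess_perm23 t1 t2 t3 : excess t1 t2 t3 = excess t1 t3 t2.
Proof. by rewrite /excess; ring. Qed.

Lemma sens1_ge t : E * t ^+ 2 <= sens1 t.
Proof. by rewrite /sens1 lerDr sqr_ge0. Qed.

Lemma slack_ge0 t : 0 <= t -> 0 <= slack t.
Proof. by move=> t0; rewrite /slack mulr_ge0 ?sqr_ge0 // mulr_ge0 //; lra. Qed.

Hypothesis E_bounds : 738 / 100 <= E <= 74 / 10.

Let E_ge7 : 7 <= E. Proof. by case/andP: E_bounds => E_lo _; lra. Qed.
Let E_ge0 : 0 <= E. Proof. by apply: le_trans E_ge7. Qed.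

Lemma sens1_ge0 t : 0 <= sens1 t.
Proof. by rewrite /sens1 addr_ge0 ?sqr_ge0 // mulr_ge0 ?sqr_ge0. Qed.

Lemma defect_ge t : - t <= defect t.
Proof. by rewrite /defect lerBrDr addNr mulr_ge0 ?sqr_ge0 // addr_ge0. Qed.

Lemma defect_lt0_le t : defect t < 0 -> t <= 1 / 8.
Proof.
rewrite /defect => dt; rewrite leNgt; apply/negP => t8.
have t0 : 0 < t by lra.
have E7t : 0 <= (E - 7) * t by apply: mulr_ge0; [rewrite subr_ge0 | exact: ltW].
have : 0 < t * ((1 + E) * t - 1) by apply: mulr_gt0 => //; lra.
lra.
Qed.

Lemma sens1_mul_ge t2 t3 : E ^+ 2 * (t2 * t3) ^+ 2 <= sens1 t2 * sens1 t3.
Proof.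
have -> : E ^+ 2 * (t2 * t3) ^+ 2 = E * t2 ^+ 2 * (E * t3 ^+ 2) by ring.
have Et2_ge0 t : 0 <= E * t ^+ 2 by rewrite mulr_ge0 ?sqr_ge0.
exact: ler_pM (Et2_ge0 _) (Et2_ge0 _) (sens1_ge _) (sens1_ge _).
Qed.

Lemma slack_sens1_ge t1 t2 t3 : 0 <= t1 ->
  E ^+ 2 * slack t1 * (t2 * t3) ^+ 2 <= slack t1 * sens1 t2 * sens1 t3.
Proof.
move=> t10; rewrite -mulrA -[slack t1 * _ * _]mulrA mulrCA.
by rewrite ler_wpM2l ?slack_ge0 ?sens1_mul_ge.
Qed.

Lemma slack_bound t : 0 <= t ->
  2 * (1 + E) ^+ 2 * t - (1 + E) ^+ 3 / 3 * t ^+ 2 <= E ^+ 2 * slack t.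
Proof.
move=> t0; case/andP: E_bounds => E_lo E_hi; rewrite -subr_ge0.
have -> : E ^+ 2 * slack t - (2 * (1 + E) ^+ 2 * t - (1 + E) ^+ 3 / 3 * t ^+ 2) =
    t * (E ^+ 2 * 7 / 2 * (1 - t) ^+ 2 - 2 * (1 + E) ^+ 2 + (1 + E) ^+ 3 / 3 * t).
  by rewrite /slack; field.
apply: mulr_ge0 => //.
have e1 : (738 / 100) ^+ 2 <= E ^+ 2 by nra.
have e2 : (1 + E) ^+ 2 <= (84 / 10) ^+ 2 by nra.
have e3 : (838 / 100) ^+ 3 <= (1 + E) ^+ 3 by nra.
have u0 : 0 <= (1 - t) ^+ 2 := sqr_ge0 _.
have s0 : 0 <= (1 - t - 1 / 2) ^+ 2 := sqr_ge0 _.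
have b1 : (738 / 100) ^+ 2 * 7 / 2 * (1 - t) ^+ 2 <= E ^+ 2 * 7 / 2 * (1 - t) ^+ 2.
  by nra.
have b3 : (838 / 100) ^+ 3 / 3 * t <= (1 + E) ^+ 3 / 3 * t by nra.
have : 0 <= (738 / 100) ^+ 2 * 7 / 2 * (1 - t) ^+ 2 - 2 * (84 / 10) ^+ 2
            + (838 / 100) ^+ 3 / 3 * t by nra.
lra.
Qed.

Lemma slack_ge_defect_lt0 t : 0 <= t -> defect t < 0 ->
  (1 + E) ^+ 3 * t ^+ 2 <= E ^+ 2 * slack t.
Proof.
rewrite /defect /slack => t0 dt; case/andP: E_bounds => E_lo E_hi.
have t8 := defect_lt0_le dt.
have Et : (1 + E) * t <= 1 by nra.
have u1 : (7 / 8) ^+ 2 <= (1 - t) ^+ 2 by nra.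
have a : (1 + E) ^+ 3 * t <= (1 + E) ^+ 2.
  have := ler_wpM2l (sqr_ge0 (1 + E)) Et.
  by rewrite mulr1 (_ : (1 + E) ^+ 3 * t = (1 + E) ^+ 2 * ((1 + E) * t)) //; ring.
have b : (1 + E) ^+ 2 <= 71 by nra.
have c : 49 <= E ^+ 2 by nra.
have d : 71 <= E ^+ 2 * (7 / 2) * (1 - t) ^+ 2 by nra.
have -> : (1 + E) ^+ 3 * t ^+ 2 = t * ((1 + E) ^+ 3 * t) by ring.
have -> : E ^+ 2 * (7 / 2 * t * (1 - t) ^+ 2) = t * (E ^+ 2 * (7 / 2) * (1 - t) ^+ 2).
  by ring.
by rewrite ler_wpM2l // (le_trans a) // (le_trans b).
Qed.

Lemma excess_ge0_defect_ge0 t1 t2 t3 : 0 <= t1 -> 0 <= t2 -> 0 <= t3 ->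
  0 <= defect t1 -> 0 <= defect t2 -> 0 <= defect t3 -> 0 <= excess t1 t2 t3.
Proof.
move=> t10 t20 t30 w1 w2 w3.
have X_ge0 t : 0 <= (1 + E) * t ^+ 2 by rewrite mulr_ge0 ?sqr_ge0 ?addr_ge0.
have W_le t : 0 <= t -> defect t <= (1 + E) * t ^+ 2 by rewrite /defect; lra.
have prodW : (1 + E) ^+ 3 * (t1 * t2 * t3) ^+ 2 - (1 + E) ^+ 2 *
    (t1 * (t2 * t3) ^+ 2 + t2 * (t1 * t3) ^+ 2 + t3 * (t1 * t2) ^+ 2)
    <= defect t1 * defect t2 * defect t3.
  have i1 : defect t1 * t2 * ((1 + E) * t3 ^+ 2) <=
      (1 + E) * t1 ^+ 2 * t2 * ((1 + E) * t3 ^+ 2).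
    by rewrite !ler_wpM2r ?W_le.
  have i2 : defect t1 * defect t2 * t3 <=
      (1 + E) * t1 ^+ 2 * ((1 + E) * t2 ^+ 2) * t3.
    by rewrite ler_wpM2r // ler_pM ?W_le.
  have -> : defect t1 * defect t2 * defect t3 =
      (1 + E) ^+ 3 * (t1 * t2 * t3) ^+ 2 - t1 * ((1 + E) * t2 ^+ 2) * ((1 + E) * t3 ^+ 2)
      - defect t1 * t2 * ((1 + E) * t3 ^+ 2) - defect t1 * defect t2 * t3.
    by rewrite /defect; ring.
  lra.
have b t t' t'' : 0 <= t -> 0 <= (t' * t'') ^+ 2 *
    (E ^+ 2 * slack t - (2 * (1 + E) ^+ 2 * t - (1 + E) ^+ 3 / 3 * t ^+ 2)).
  by move=> t0; rewrite mulr_ge0 ?sqr_ge0 // subr_ge0 slack_bound.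
have := b _ t2 t3 t10; have := b _ t1 t3 t20; have := b _ t1 t2 t30.
have := slack_sens1_ge t2 t3 t10; have := slack_sens1_ge t1 t3 t20.
have := slack_sens1_ge t1 t2 t30.
rewrite /excess; lra.
Qed.

Lemma excess_ge0_defect1_lt0 t1 t2 t3 : 0 <= t1 -> 0 <= t2 -> 0 <= t3 ->
  defect t1 < 0 -> 0 <= defect t2 -> 0 <= defect t3 -> 0 <= excess t1 t2 t3.
Proof.
move=> t10 t20 t30 w1 w2 w3.
have E1_ge0 : 0 <= 1 + E by rewrite addr_ge0.
have EW_le t : 0 <= t -> E * defect t <= (1 + E) * sens1 t.
  move=> t0; have := mulr_ge0 E_ge0 t0; have := mulr_ge0 E1_ge0 (sqr_ge0 (1 - t)).
  by rewrite /defect /sens1; lra.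
have W23 : E ^+ 2 * (defect t2 * defect t3) <= (1 + E) ^+ 2 * (sens1 t2 * sens1 t3).
  have -> : E ^+ 2 * (defect t2 * defect t3) = E * defect t2 * (E * defect t3) by ring.
  have -> : (1 + E) ^+ 2 * (sens1 t2 * sens1 t3) =
      (1 + E) * sens1 t2 * ((1 + E) * sens1 t3) by ring.
  by rewrite ler_pM ?mulr_ge0 ?EW_le.
have slack1_ge : (1 + E) ^+ 3 * t1 ^+ 2 <=
    E ^+ 2 * slack t1 + 2 * (1 + E) ^+ 2 * defect t1.
  have := slack_bound t10; have := mulr_ge0 (exprn_ge0 3 E1_ge0) (sqr_ge0 t1).
  by rewrite /defect; lra.
have s23_ge0 : 0 <= sens1 t2 * sens1 t3 by rewrite mulr_ge0 ?sens1_ge0.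
have E2_gt0 : 0 < E ^+ 2 by rewrite exprn_gt0 // (lt_le_trans _ E_ge7).
rewrite -(pmulr_rge0 _ E2_gt0) /excess.
have := ler_wpM2l (mulr_ge0 (exprn_ge0 3 E1_ge0) (sqr_ge0 t1)) (sens1_mul_ge t2 t3).
have := ler_wpM2r s23_ge0 slack1_ge.
have := ler_wnM2l (ltW w1) W23.
have := mulr_ge0 (sqr_ge0 E) (addr_ge0
  (mulr_ge0 (mulr_ge0 (sens1_ge0 t1) (slack_ge0 t20)) (sens1_ge0 t3))
  (mulr_ge0 (mulr_ge0 (sens1_ge0 t1) (sens1_ge0 t2)) (slack_ge0 t30))).
lra.
Qed.

Lemma excess_ge0_defect12_lt0 t1 t2 t3 : 0 <= t1 -> 0 <= t2 -> 0 <= t3 ->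
  defect t1 < 0 -> defect t2 < 0 -> 0 <= excess t1 t2 t3.
Proof.
move=> t10 t20 t30 w1 w2.
have P_le : (1 + E) ^+ 3 * (t1 * t2 * t3) ^+ 2 <= slack t1 * sens1 t2 * sens1 t3.
  apply: le_trans (slack_sens1_ge t2 t3 t10).
  have -> : (1 + E) ^+ 3 * (t1 * t2 * t3) ^+ 2 = (1 + E) ^+ 3 * t1 ^+ 2 * (t2 * t3) ^+ 2.
    by ring.
  by rewrite ler_wpM2r ?sqr_ge0 ?slack_ge_defect_lt0.
have W_ge : - (t1 * t2 * t3) <= defect t1 * defect t2 * defect t3.
  have W12_ge0 : 0 <= defect t1 * defect t2 by rewrite mulr_le0 ?ltW.
  have W12_le : defect t1 * defect t2 <= t1 * t2.
    rewrite -mulrNN; apply: ler_pM; rewrite 1?lerNl ?defect_ge ?oppr_ge0 //; exact: ltW.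
  have := ler_wpM2l W12_ge0 (defect_ge t3); have := ler_wpM2r t30 W12_le.
  rewrite mulrN; lra.
have cross : 2 * (t1 * t2 * t3) <= sens1 t1 * slack t2 * sens1 t3.
  have t18 := defect_lt0_le w1; have t28 := defect_lt0_le w2.
  have sq_ge (t : R) : 0 <= t <= 1 / 8 -> 49 / 64 <= (1 - t) ^+ 2 by move=> /andP[? ?]; nra.
  have A1 : 49 / 64 <= sens1 t1.
    by rewrite /sens1 -[49 / 64]addr0 lerD ?sq_ge ?t10 // mulr_ge0 ?sqr_ge0.
  have G2 : 7 / 2 * t2 * (49 / 64) <= slack t2.
    by rewrite /slack ler_wpM2l ?sq_ge ?t20 // mulr_ge0 //; lra.
  have A3 : t3 / 4 <= sens1 t3.
    have E7 : 0 <= E - 7 by rewrite subr_ge0.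
    have := sqr_ge0 (t3 - 9 / 64); have := mulr_ge0 E7 (sqr_ge0 t3).
    by rewrite /sens1; lra.
  have := ler_pM _ _ (ler_pM _ _ A1 G2) A3.
  have := mulr_ge0 t20 t30.
  nra.
have := mulr_ge0 (mulr_ge0 (sens1_ge0 t1) (sens1_ge0 t2)) (slack_ge0 t30).
rewrite /excess; lra.
Qed.

Lemma excess_ge0 t1 t2 t3 : 0 <= t1 -> 0 <= t2 -> 0 <= t3 -> 0 <= excess t1 t2 t3.
Proof.
move=> t10 t20 t30.
have [w1|w1] := ltP (defect t1) 0; have [w2|w2] := ltP (defect t2) 0;
  have [w3|w3] := ltP (defect t3) 0.
- exact: excess_ge0_defect12_lt0.
- exact: excess_ge0_defect12_lt0.
- by rewrite excess_perm23 excess_ge0_defect12_lt0.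
- exact: excess_ge0_defect1_lt0.
- by rewrite excess_perm13 excess_ge0_defect12_lt0.
- by rewrite excess_perm12 excess_ge0_defect1_lt0.
- by rewrite excess_perm13 excess_ge0_defect1_lt0.
- exact: excess_ge0_defect_ge0.
Qed.

Lemma sens3_le_majorant t1 t2 t3 : 0 <= t1 -> 0 <= t2 -> 0 <= t3 ->
  sens3 t1 t2 t3 <= majorant t1 * majorant t2 * majorant t3.
Proof.
move=> t10 t20 t30.
have prod_ge0 (x y z : R) : 0 <= x -> 0 <= y -> 0 <= z -> 0 <= x * y * z.
  by move=> x0 y0 z0; rewrite !mulr_ge0.
have s1 := sens1_ge0 t1; have s2 := sens1_ge0 t2; have s3 := sens1_ge0 t3.
have g1 := slack_ge0 t10; have g2 := slack_ge0 t20; have g3 := slack_ge0 t30.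
have := prod_ge0 _ _ _ g1 g2 s3; have := prod_ge0 _ _ _ g1 s2 g3.
have := prod_ge0 _ _ _ s1 g2 g3; have := prod_ge0 _ _ _ g1 g2 g3.
have := excess_ge0 t10 t20 t30.
rewrite sens3E /majorant /excess; lra.
Qed.

End SensitivityBound.

Section PoissonModel.
Variable R : realType.
Implicit Types (y : pt R).

(* Taylor expansion of order three at 0 for t <= 3/5, and at 1 beyond. *)
Lemma majorant_le_expR (t : R) : 0 <= t -> majorant (expR 2) t <= expR (2 * t).
Proof.
move=> t0; have /andP[E_lo E_hi] := expR2_bounds R.
rewrite /majorant /sens1 /slack; set E := expR 2 in E_lo E_hi *.
have [t_small|t_large] := leP t (3 / 5).
  apply: le_trans (expR_ge_cubic (2 * t)).
  have q : 0 <= 1 / 2 + (8 - E) * t - 13 / 6 * t ^+ 2 by nra.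
  have := mulr_ge0 t0 q.
  have -> : 1 + 2 * t + (2 * t) ^+ 2 / 2 + (2 * t) ^+ 3 / 6 =
      (1 - t) ^+ 2 + E * t ^+ 2 + 7 / 2 * t * (1 - t) ^+ 2
      + t * (1 / 2 + (8 - E) * t - 13 / 6 * t ^+ 2) by field.
  lra.
have -> : expR (2 * t) = E * expR (2 * (t - 1)) by rewrite /E -expRD; congr expR; ring.
apply: le_trans (ler_wpM2l (_ : 0 <= E) (expR_ge_cubic (2 * (t - 1)))); last lra.
set y := t - 1.
have q : 0 <= (E - 9 / 2) + (4 * E / 3 - 7 / 2) * y by rewrite /y; nra.
have := mulr_ge0 (sqr_ge0 y) q.
have -> : E * (1 + 2 * y + (2 * y) ^+ 2 / 2 + (2 * y) ^+ 3 / 6) =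
    (1 - t) ^+ 2 + E * t ^+ 2 + 7 / 2 * t * (1 - t) ^+ 2
    + y ^+ 2 * ((E - 9 / 2) + (4 * E / 3 - 7 / 2) * y) by rewrite /y; field.
lra.
Qed.

Definition lam_sqrt y : R := expR (- (x1 y + x2 y + x3 y) / 2).

Lemma lambda_cor1 y : lambda (beta_cor1 R) y = lam_sqrt y ^+ 2.
Proof.
rewrite /lambda /lam_sqrt -expRM_natl; congr expR.
by rewrite !mxE !big_ord_recl big_ord0 !mxE /=; field.
Qed.

Lemma lam_sqrt_sq y : lam_sqrt y ^+ 2 = expR (- (x1 y + x2 y + x3 y)).
Proof. by rewrite /lam_sqrt -expRM_natl; congr expR; field. Qed.

(* The coordinates of f(y) in the basis f(x_0), ..., f(x_6), in terms of t = y / 2. *)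
Definition lagrange y (j : 'I_7) : R :=
  let t1 := x1 y / 2 in let t2 := x2 y / 2 in let t3 := x3 y / 2 in
  nth 0 [:: 1 - t1 - t2 - t3 + t1 * t2 + t1 * t3 + t2 * t3;
            t1 - t1 * t2 - t1 * t3; t2 - t1 * t2 - t2 * t3; t3 - t1 * t3 - t2 * t3;
            t1 * t2; t1 * t3; t2 * t3] j.

Definition supp_mx : 'M[R]_7 :=
  \matrix_(i, j) (lam_sqrt (pts_cor1 R j) * fvec (pts_cor1 R j) i 0).

Definition hvec y : 'cV[R]_7 :=
  \col_j (lam_sqrt y * lagrange y j / lam_sqrt (pts_cor1 R j)).

Lemma supp_mx_hvec y : supp_mx *m hvec y = lam_sqrt y *: fvec y.
Proof.
apply/matrixP => i k; rewrite ord1 !mxE.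
have lam_sqrt_neq0 p : lam_sqrt p != 0 by rewrite gt_eqF ?expR_gt0.
have cancel (a f l : R) : a != 0 -> a * f * (l / a) = f * l by move=> a0; field.
under eq_bigr => j _ do rewrite !mxE cancel ?lam_sqrt_neq0 //.
rewrite !big_ord_recl big_ord0 /lagrange /=.
by case: i => [[|[|[|[|[|[|[|//]]]]]]] ?]; rewrite /x1 /x2 /x3 /=; field.
Qed.

Lemma infomat_factor m (y : 'I_m -> pt R) (v : 'I_m -> R) :
  infomat (beta_cor1 R) y v = supp_mx *m gram v (hvec \o y) *m supp_mx^T.
Proof.
rewrite /infomat /gram mulmx_sumr mulmx_suml; apply: eq_bigr => k _ /=.
rewrite -scalemxAr -scalemxAl.
have -> : supp_mx *m (hvec (y k) *m (hvec (y k))^T) *m supp_mx^T =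
    (supp_mx *m hvec (y k)) *m (supp_mx *m hvec (y k))^T by rewrite trmx_mul !mulmxA.
rewrite supp_mx_hvec linearZ /= -scalemxAr -scalemxAl !scalerA lambda_cor1.
by rewrite expr2.
Qed.

Lemma infomat_cor1 :
  infomat (beta_cor1 R) (@pts_cor1 R) (@wts_cor1 R) = 7%:R^-1 *: (supp_mx *m supp_mx^T).
Proof.
apply/matrixP => i k.
rewrite /infomat summxE !mxE mulr_sumr; apply: eq_bigr => j _.
by rewrite !mxE big_ord1 !mxE lambda_cor1 /wts_cor1; field.
Qed.

Lemma expR_pts (j : 'I_7) :
  expR (x1 (pts_cor1 R j) + x2 (pts_cor1 R j) + x3 (pts_cor1 R j)) =
  expR 2 ^+ nth 0%N [:: 0; 1; 1; 1; 2; 2; 2]%N j.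
Proof.
rewrite -expRM_natl; congr expR.
by case: j => [[|[|[|[|[|[|[|//]]]]]]] ?]; rewrite /x1 /x2 /x3 /=; lra.
Qed.

Lemma hvec_norm y : \sum_(i < 7) hvec y i 0 ^+ 2 =
  expR (- (x1 y + x2 y + x3 y)) * sens3 (expR 2) (x1 y / 2) (x2 y / 2) (x3 y / 2).
Proof.
have hvec_sq j : hvec y j 0 ^+ 2 = expR (- (x1 y + x2 y + x3 y)) *
    (lagrange y j ^+ 2 * expR 2 ^+ nth 0%N [:: 0; 1; 1; 1; 2; 2; 2]%N j).
  by rewrite mxE !exprMn exprVn !lam_sqrt_sq -expR_pts -expRN opprK mulrA.
rewrite (eq_bigr _ (fun j _ => hvec_sq j)) -mulr_sumr.
by rewrite !big_ord_recl big_ord0 /lagrange /sens3 /=; field.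
Qed.

Lemma hvec_norm_le1 y : nonneg_orthant y -> \sum_(i < 7) hvec y i 0 ^+ 2 <= 1.
Proof.
case=> y1 [y2 y3]; rewrite hvec_norm.
have t_ge0 (x : R) : 0 <= x -> 0 <= x / 2 by move=> x0; rewrite divr_ge0.
have maj_ge0 (x : R) : 0 <= x -> 0 <= majorant (expR 2) (x / 2).
  by move=> x0; rewrite addr_ge0 ?slack_ge0 ?t_ge0 ?sens1_ge0 ?expR2_bounds.
have maj_le (x : R) : 0 <= x -> majorant (expR 2) (x / 2) <= expR x.
  move=> x0; apply: le_trans (majorant_le_expR (t_ge0 _ x0)) _.
  by rewrite (mulrC 2) divfK ?pnatr_eq0.
have maj_prod : majorant (expR 2) (x1 y / 2) * majorant (expR 2) (x2 y / 2)
    * majorant (expR 2) (x3 y / 2) <= expR (x1 y) * expR (x2 y) * expR (x3 y).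
  exact: ler_pM (mulr_ge0 (maj_ge0 _ y1) (maj_ge0 _ y2)) (maj_ge0 _ y3)
    (ler_pM (maj_ge0 _ y1) (maj_ge0 _ y2) (maj_le _ y1) (maj_le _ y2)) (maj_le _ y3).
have sens3_le := le_trans (sens3_le_majorant (expR2_bounds R)
  (t_ge0 _ y1) (t_ge0 _ y2) (t_ge0 _ y3)) maj_prod.
apply: le_trans (ler_wpM2l (expR_ge0 _) sens3_le) _.
by rewrite -!expRD addNr expR0.
Qed.

Lemma is_design_cor1 : is_design (@nonneg_orthant R) (@pts_cor1 R) (@wts_cor1 R).
Proof.
split; last split; last split.
- move=> i j /(congr1 (fun p : pt R => x1 p + 2 * x2 p + 4 * x3 p)).
  case: i j => [[|[|[|[|[|[|[|//]]]]]]] ?] [[|[|[|[|[|[|[|//]]]]]]] ?];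
    rewrite /x1 /x2 /x3 /= => code; apply/val_inj => //=; exfalso; lra.
- by case=> [[|[|[|[|[|[|[|//]]]]]]] ?]; rewrite /nonneg_orthant /x1 /x2 /x3 /=; lra.
- by move=> i; rewrite /wts_cor1; lra.
- by rewrite !big_ord_recl big_ord0 /wts_cor1; field.
Qed.

End PoissonModel.

Theorem corollary1 (R : realType) :
  locally_D_optimal (beta_cor1 R) (@nonneg_orthant R) (@pts_cor1 R) (@wts_cor1 R).
Proof.
split; first exact: is_design_cor1.
move=> m y v [_ [yX [v_ge0 v_sum1]]].
rewrite infomat_factor infomat_cor1 detZ !det_mulmx !det_tr.
rewrite mulrAC -expr2 mulrC ler_wpM2r ?sqr_ge0 //.
exact: det_gram_le v_ge0 v_sum1 (fun k => hvec_norm_le1 (yX k)).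
Qed.
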